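(* Let $n\ge1$, $1\le s\le n$, $A_1,\dots,A_s\subset\mathbb Z^n$ finite, $m_1+\dots+m_s=n$ nonnegative integers, let $b$ be a lifting in general position, let $F_0\subset\cdots\subset F_n=\mathbb R^n$ be a generic affine flag, let $(m_i(d))_{d}$ be sequences as in the context, and let $1\le d\le n$. Let $\boldsymbol\xi$ be a vertex of $X'_d$, and let $q\in\{1,\dots,s\}$ be the unique index with $m_q(\boldsymbol\xi)=m_q(d-1)+1$. Then there are exactly $m_q(\boldsymbol\xi)+1=m_q(d-1)+2$ edges of $X'_d$ having $\boldsymbol\xi$ as an endpoint. Moreover, these edges can be written as $\{\boldsymbol\xi+t\,\Delta_j\boldsymbol\xi: t\in(0,I_j)\}$, $j=1,\dots,m_q(\boldsymbol\xi)+1$, where each $\Delta_j\boldsymbol\xi\in\mathbb R^n$ and each $I_j$ is either a strictly positive real number or $+\infty$, and the balancing condition $\sum_j \Delta_j\boldsymbol\xi=0$ holds.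
   Context: A lifting is a function $b:A_1\sqcup\cdots\sqcup A_s\to\mathbb R$, written $b(i,\mathbf a)$. It is in general position if for every subset $S$ of $\{[-\mathrm e_i,\mathbf a,b(i,\mathbf a)]:\mathbf a\in A_i\}\subset\mathbb R^s\times\mathbb R^n\times\mathbb R$ of cardinality at most $n+s+1$, either the vectors of $S$ are linearly independent or $[0,\dots,0,1]$ is a linear combination of them. For $\boldsymbol\xi\in(\mathbb R^n)^*$, $\lambda_i(\boldsymbol\xi)=\max_{\mathbf a\in A_i}(\boldsymbol\xi(\mathbf a)-b(i,\mathbf a))$, and $m_i(\boldsymbol\xi)+1$ is the number of $\mathbf a\in A_i$ attaining it; these pairs $(i,\mathbf a)$ are the active constraints at $\boldsymbol\xi$. The flag consists of affine subspaces with $\dim F_d=d$. For each $i$, $(m_i(d))_{d=0,\dots,n}$ is non-decreasing in $\mathbb N_0$ with $m_i(0)=0$, $m_i(n)=m_i$, $\sum_i m_i(d)=d$. $X'_d=\{\boldsymbol\xi\in F_d: m_i(\boldsymbol\xi)\ge m_i(d-1)\ \forall i\}$. A vertex of $X'_d$ is a point $\boldsymbol\xi\in X'_d$ with $\sum_i m_i(\boldsymbol\xi)=d$. An edge of $X'_d$ is a one-dimensional set of the form $\{\boldsymbol\eta\in F_d:\ \text{the set of active constraints at }\boldsymbol\eta\text{ equals }W\}$, where $W$ contains exactly $m_i(d-1)+1$ elements of each $A_i$. *)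

From HB Require Import structures.
From mathcomp Require Import all_boot all_order all_algebra.
From mathcomp Require Import reals.
From mathcomp Require Import mpoly.
Set Implicit Arguments. Unset Strict Implicit. Unset Printing Implicit Defensive.
Import Order.TTheory GRing.Theory Num.Theory.
Local Open Scope ring_scope.

Section Tropical.
Variables (R : realType) (n s : nat).
Variables (A : 'I_s -> seq 'rV[int]_n) (b : 'I_s -> 'rV[int]_n -> R).

(* xi(a) for xi in (R^n)^* identified with row vectors *)
Definition pairing (xi : 'rV[R]_n) (a : 'rV[int]_n) : R :=
  \sum_(j < n) xi 0 j * (a 0 j)%:~R.

Definition objval (xi : 'rV[R]_n) (i : 'I_s) (a : 'rV[int]_n) : R :=
  pairing xi a - b i a.

Definition active (xi : 'rV[R]_n) (i : 'I_s) (a : 'rV[int]_n) : bool :=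
  (a \in A i) && all (fun a' => objval xi i a' <= objval xi i a) (A i).

Definition mult (xi : 'rV[R]_n) (i : 'I_s) : nat :=
  (count (active xi i) (A i)).-1.

Definition lift_vec (i : 'I_s) (a : 'rV[int]_n) : 'rV[R]_(s + n + 1) :=
  row_mx (row_mx (- delta_mx (0 : 'I_1) i) (map_mx (fun z : int => z%:~R) a))
         ((b i a)%:M : 'M[R]_1).

Definition last_vec : 'rV[R]_(s + n + 1) := row_mx 0 (1%:M : 'M[R]_1).

Definition lin_indep (m : nat) (vs : seq 'rV[R]_m) : Prop :=
  forall c : 'I_(size vs) -> R,
    \sum_(k < size vs) c k *: vs`_k = 0 -> forall k, c k = 0.

Definition in_span (m : nat) (vs : seq 'rV[R]_m) (v : 'rV[R]_m) : Prop :=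
  exists c : 'I_(size vs) -> R, \sum_(k < size vs) c k *: vs`_k = v.

Definition general_position : Prop :=
  forall S : seq ('I_s * 'rV[int]_n),
    uniq S -> (forall x, x \in S -> x.2 \in A x.1) ->
    (size S <= n + s + 1)%N ->
    lin_indep [seq lift_vec x.1 x.2 | x <- S] \/
    in_span [seq lift_vec x.1 x.2 | x <- S] last_vec.

Definition valid_mseq (mm : 'I_s -> nat) (ms : 'I_s -> nat -> nat) : Prop :=
  (forall i, ms i 0 = 0%N /\ ms i n = mm i /\
             forall d, (d < n)%N -> (ms i d <= ms i d.+1)%N) /\
  (forall d, (d <= n)%N -> (\sum_(i < s) ms i d)%N = d).

(* The affine flag F_d = p + span(row_0 M, ..., row_{d-1} M), M invertible *)
Variables (p : 'rV[R]_n) (M : 'M[R]_n).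

Definition in_flag (d : nat) (eta : 'rV[R]_n) : Prop :=
  exists c : 'I_n -> R, eta = p + \sum_(j < n | (j < d)%N) c j *: row j M.

Variable ms : 'I_s -> nat -> nat.

Definition in_Xp (d : nat) (xi : 'rV[R]_n) : Prop :=
  in_flag d xi /\ forall i, (ms i d.-1 <= mult xi i)%N.

Definition is_vertex (d : nat) (xi : 'rV[R]_n) : Prop :=
  in_Xp d xi /\ (\sum_(i < s) mult xi i)%N = d.

Definition one_dim (E : 'rV[R]_n -> Prop) : Prop :=
  (exists (x0 v : 'rV[R]_n), forall eta, E eta -> exists t : R, eta = x0 + t *: v) /\
  (exists e1 e2, E e1 /\ E e2 /\ e1 <> e2).

Definition is_edge (d : nat) (E : 'rV[R]_n -> Prop) : Prop :=
  one_dim E /\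
  exists W : 'I_s -> pred 'rV[int]_n,
    (forall i a, W i a -> a \in A i) /\
    (forall i, count (W i) (A i) = (ms i d.-1).+1) /\
    (forall eta, E eta <-> (in_flag d eta /\ forall i a, active eta i a = W i a)).

Definition endpoint (xi : 'rV[R]_n) (E : 'rV[R]_n -> Prop) : Prop :=
  ~ E xi /\
  forall eps : R, 0 < eps ->
    exists eta, E eta /\ \sum_(j < n) (eta 0 j - xi 0 j) ^+ 2 < eps.

End Tropical.

(* {xi + t Delta : t in (0, I)}, with I = None standing for +infinity *)
Definition ray (R : realType) (n : nat) (xi D : 'rV[R]_n) (I : option R)
  (eta : 'rV[R]_n) : Prop :=
  exists t : R, 0 < t /\ (if I is Some r then t < r else True) /\ eta = xi + t *: D.

Definition flag_coords (R : realType) (n : nat) (p : 'rV[R]_n) (M : 'M[R]_n) :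
  'I_(n + n * n) -> R :=
  fun k => match split k with inl j => p 0 j | inr l => mxvec M 0 l end.

From HB Require Import structures.
From mathcomp Require Import all_boot all_order all_algebra.
From mathcomp Require Import reals.
From mathcomp Require Import mpoly.
From mathcomp Require Import lra zify.
Set Implicit Arguments. Unset Strict Implicit. Unset Printing Implicit Defensive.
Import Order.TTheory GRing.Theory Num.Theory.
Local Open Scope ring_scope.

(* At a vertex xi of X'_d the active points of A_i are m_i(xi) + 1 in number;
   fixing a base point in each A_i, the d non-base active points a give the d
   linear forms eta |-> eta(a - base_i), which together with the n - d
   equations cutting out F_d form a square system.  General position makes
   the d difference vectors independent, and genericity of the flag (the
   nonvanishing of the determinant of every such system, a polynomial in the
   flag coordinates) makes the system invertible.  An edge from xi keeps all
   active points but one point a_j of A_q (by continuity nothing new becomes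
   active near xi), and by the counting m_q(d-1)+1 only one point of A_q may
   be dropped: solving the system with right-hand side "lower the objective of
   a_j by one unit" gives the direction Delta_j, and the edge runs until an
   inactive constraint catches up.  The right-hand sides sum to zero over j
   because every active point of A_q is dropped exactly once, whence the
   balancing condition. *)

Section GenericFlag.
Variables (R : realType) (n : nat) (pts : seq 'rV[int]_n).
Local Notation Np := (size pts).+1.

(* A configuration f selects, for each row k < d, a pair of indices into pts
   (index size pts is out of range and then reads as 0). *)
Definition diff_mx (d : nat) (f : {ffun 'I_n -> 'I_Np * 'I_Np}) : 'M[R]_n :=
  \matrix_(k, c) (if (k < d)%N then ((pts`_(f k).1 - pts`_(f k).2) 0 c)%:~R else 0).

Definition low_idmx (d : nat) : 'M[R]_n := diag_mx (\row_k ((d <= k)%N)%:R).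

Definition flag_mx d f (M : 'M[R]_n) : 'M[R]_n := diff_mx d f *m M^T + low_idmx d.

Definition flag_det_poly d f : {mpoly R[n + n * n]} :=
  \det (\matrix_(k, l) (\sum_(c < n) (diff_mx d f k c)%:MP * 'X_(rshift n (mxvec_index l c))
       + (low_idmx d k l)%:MP)).

Lemma flag_det_polyE d f (p : 'rV[R]_n) M :
  (flag_det_poly d f).@[flag_coords p M] = \det (flag_mx d f M).
Proof.
rewrite /flag_det_poly -det_map_mx; congr (\det _); apply/matrixP => k l.
rewrite !mxE rmorphD /= mevalC rmorph_sum /=; congr (_ + _).
apply: eq_bigr => c _; rewrite mevalM mevalC mevalXU /flag_coords.
have -> : split (rshift n (mxvec_index l c)) = inr (mxvec_index l c) :=
  unsplitK (inr _ : 'I_n + 'I_(n * n)).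
by rewrite mxvecE !mxE.
Qed.

(* At M = diff_mx d f the system is D D^T + J_d, a sum of two positive
   semidefinite forms whose kernels meet trivially. *)
Lemma flag_det_poly_neq0 d f :
  (forall x : 'rV[R]_n, x *m diff_mx d f = 0 -> forall k : 'I_n, (k < d)%N -> x 0 k = 0) ->
  flag_det_poly d f != 0.
Proof.
move=> Dfree; apply/negP => /eqP Q0.
suff : \det (flag_mx d f (diff_mx d f)) != 0.
  by rewrite -(flag_det_polyE d f 0) Q0 meval0 eqxx.
rewrite -unitfE -unitmxE -row_free_unit; apply: inj_row_free => x Hx.
set D := diff_mx d f.
have : (x *m flag_mx d f D *m x^T) 0 0 = 0 by rewrite Hx mul0mx mxE.
rewrite /flag_mx mulmxDr mulmxDl mulmxA -[x *m D *m D^T *m x^T]mulmxA -trmx_mul.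
rewrite /low_idmx mul_mx_diag !mxE.
set y := x *m D.
under eq_bigr do rewrite !mxE.
under [X in _ + X]eq_bigr do rewrite !mxE.
have sq_ind_ge0 (k : 'I_n) : 0 <= x 0 k * (d <= k)%N%:R * x 0 k.
  by case: (d <= k)%N; rewrite ?mulr1 ?mulr0 ?mul0r // -expr2 sqr_ge0.
move/eqP; rewrite paddr_eq0; first last.
- by apply: sumr_ge0 => k _.
- by apply: sumr_ge0 => k _; rewrite -expr2 sqr_ge0.
case/andP => /eqP Sy /eqP Sx.
have y0 : y = 0.
  apply/rowP => c; rewrite [RHS]mxE [LHS]mxE; apply/eqP; rewrite -sqrf_eq0 expr2; apply/eqP.
  by apply: (psumr_eq0P _ Sy) => // c' _; rewrite -expr2 sqr_ge0.
apply/rowP => k; rewrite mxE.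
case: (ltnP k d) => Hk; first exact: Dfree.
have := psumr_eq0P (fun k _ => sq_ind_ge0 k) Sx (i := k) isT.
by rewrite Hk mulr1 => /eqP; rewrite -expr2 sqrf_eq0 => /eqP.
Qed.

Definition generic_flag_poly : {mpoly R[n + n * n]} :=
  \prod_(d < n.+1) \prod_(f : {ffun 'I_n -> 'I_Np * 'I_Np})
    (if flag_det_poly d f != 0 then flag_det_poly d f else 1).

Lemma generic_flag_poly_neq0 : generic_flag_poly != 0.
Proof.
apply/prodf_neq0 => d _; apply/prodf_neq0 => f _.
by case: ifP => // _; exact: oner_neq0.
Qed.

Lemma generic_flag_mx_unit (p : 'rV[R]_n) M (d : 'I_n.+1) f :
  generic_flag_poly.@[flag_coords p M] != 0 -> flag_det_poly d f != 0 ->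
  flag_mx d f M \in unitmx.
Proof.
rewrite unitmxE unitfE /generic_flag_poly rmorph_prod /= => /prodf_neq0 /(_ d isT).
rewrite rmorph_prod /= => /prodf_neq0 /(_ f isT).
by move=> + Qf; rewrite Qf flag_det_polyE.
Qed.

End GenericFlag.

Section SeqFacts.
Variable T : eqType.

Lemma exists_argmax (R : realType) (l : seq T) (g : T -> R) :
  l != [::] -> exists2 a, a \in l & all (fun a' => g a' <= g a) l.
Proof.
elim: l => // x l IH _.
case: (altP (l =P [::])) => [-> | /IH [a al Ha]].
  by exists x; rewrite ?mem_seq1 //= lexx.
case: (leP (g x) (g a)) => gxa.
  by exists a; rewrite ?in_cons ?al ?orbT //= gxa Ha.
exists x; first by rewrite mem_head.
rewrite /= lexx /=; apply/allP => y yl; apply: le_trans (ltW gxa).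
exact: (allP Ha).
Qed.

Lemma sub_count_eq (P Q : pred T) (l : seq T) :
  subpred P Q -> count P l = count Q l -> {in l, subpred Q P}.
Proof.
move=> PQ; elim: l => // x l IH /= E y.
have le_l := sub_count PQ l.
have Pxle : (P x <= Q x)%N by case: (P x) (PQ x) => // ->.
have El : count P l = count Q l by lia.
have PQx : P x = Q x by move: Pxle E; rewrite El; case: (P x); case: (Q x) => //= _; lia.
by rewrite in_cons => /orP [/eqP -> | yl]; [rewrite PQx | exact: IH].
Qed.

Lemma count_eq1_eq (l : seq T) (P : pred T) x y :
  count P l = 1%N -> x \in l -> P x -> y \in l -> P y -> x = y.
Proof.
rewrite -size_filter => Hs xl Px yl Py.
have : x \in filter P l by rewrite mem_filter Px xl.
have : y \in filter P l by rewrite mem_filter Py yl.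
by case: (filter P l) Hs => [|z [|]] //= _; rewrite !mem_seq1 => /eqP -> /eqP ->.
Qed.

End SeqFacts.

Lemma sum_excess1 (s : nat) (f g : 'I_s -> nat) q :
  (forall i, g i <= f i)%N -> f q = (g q).+1 ->
  (\sum_i f i = (\sum_i g i).+1)%N -> forall i, i != q -> f i = g i.
Proof.
move=> gf fq; rewrite (bigD1 q) //= [in RHS](bigD1 q) //= fq addSn => /eqP.
rewrite eqSS eqn_add2l => /eqP E.
have : (\sum_(i | i != q) (f i - g i) == 0)%N.
  rewrite -(eqn_add2l (\sum_(i | i != q) g i)) addn0 -big_split /= -E.
  by apply/eqP; apply: eq_bigr => i _; rewrite subnKC.
rewrite sum_nat_eq0 => /forallP fg i iq.
by apply/eqP; rewrite eqn_leq gf andbT -subn_eq0; move: (fg i); rewrite iq.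
Qed.

Section ExitTime.
Variable R : realType.

(* For pairs (g, v) with g > 0, the supremum of the t > 0 with t * v < g for
   all pairs; None stands for +oo. *)
Fixpoint exit_time (l : seq (R * R)) : option R :=
  match l with
  | [::] => None
  | x :: l' => if x.2 <= 0 then exit_time l' else
      Some (match exit_time l' with None => x.1 / x.2 | Some r => Num.min r (x.1 / x.2) end)
  end.

Definition lt_opt (t : R) (o : option R) : bool :=
  if o is Some r then t < r else true.

Lemma exit_time_gt0 l : all (fun x => 0 < x.1) l ->
  match exit_time l return Prop with Some r => 0 < r | None => True end.
Proof.
elim: l => //= x l IH /andP [x1_gt0 /IH].
case: ifP => // x2_le0; have xq_gt0 : 0 < x.1 / x.2 by rewrite divr_gt0 // ltNge x2_le0.
by case: (exit_time l) => // r r_gt0; rewrite lt_min r_gt0.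
Qed.

Lemma exit_timeP l t : 0 < t -> all (fun x => 0 < x.1) l ->
  lt_opt t (exit_time l) = all (fun x => t * x.2 < x.1) l.
Proof.
move=> t_gt0; elim: l => //= x l IH /andP [x1_gt0 /IH {}IH].
case: ifP => x2_le0.
  by rewrite -IH (le_lt_trans _ x1_gt0) // pmulr_rle0.
have x2_gt0 : 0 < x.2 by rewrite ltNge x2_le0.
have E : (t < x.1 / x.2) = (t * x.2 < x.1) by rewrite ltr_pdivlMr.
by rewrite -IH; case: (exit_time l) => [r|] /=; rewrite ?lt_min E ?andbT // andbC.
Qed.

End ExitTime.

Lemma sum_indicator_scale (R : pzRingType) (V : lmodType R) (T : eqType) (r : seq T)
    (z : T) (F : T -> V) :
  uniq r -> z \in r -> \sum_(y <- r) ((z == y)%:R *: F y) = F z.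
Proof.
move=> r_uniq zr; rewrite (bigD1_seq z) //= eqxx scale1r big1 ?addr0 //.
by move=> y; rewrite eq_sym => /negbTE ->; rewrite scale0r.
Qed.

Section Linear.
Variables (R : realType) (m : nat).

Lemma in_span_orth (vs : seq 'rV[R]_m) (v : 'rV[R]_m) (w : 'cV[R]_m) :
  in_span vs v -> {in vs, forall u, u *m w = 0} -> v *m w = 0.
Proof.
case=> c <- vs_w; rewrite mulmx_suml big1 // => k _.
by rewrite -scalemxAl vs_w ?scaler0 // mem_nth.
Qed.

Lemma lin_indep_map (T : eqType) (f : T -> 'rV[R]_m) (S : seq T) (c : T -> R) :
  uniq S -> lin_indep [seq f y | y <- S] ->
  \sum_(y <- S) c y *: f y = 0 -> {in S, forall y, c y = 0}.
Proof.
move=> S_uniq indep Sc0 y yS; set L := [seq f y | y <- S].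
have sizeL : size L = size S by rewrite size_map.
have := indep (fun u => c (nth y S u)).
have -> : \sum_(u < size L) c (nth y S u) *: L`_u = \sum_(y <- S) c y *: f y.
  rewrite [RHS](big_nth y) sizeL big_mkord; apply: eq_bigr => u _.
  by rewrite (nth_map y) // -sizeL.
have yL : (index y S < size L)%N by rewrite sizeL index_mem.
by move=> /(_ Sc0 (Ordinal yL)) /=; rewrite nth_index.
Qed.

End Linear.

Section Pairing.
Variables (R : realType) (n : nat).
Implicit Types (u v : 'rV[R]_n) (a c : 'rV[int]_n).
Local Notation pairing := (@pairing R n).

Lemma pairingD u v a : pairing (u + v) a = pairing u a + pairing v a.
Proof. by rewrite /pairing -big_split; apply: eq_bigr => j _; rewrite mxE mulrDl. Qed.

Lemma pairingZ t v a : pairing (t *: v) a = t * pairing v a.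
Proof. by rewrite /pairing mulr_sumr; apply: eq_bigr => j _; rewrite mxE mulrA. Qed.

Lemma pairing0 a : pairing 0 a = 0.
Proof. by rewrite /pairing big1 // => j _; rewrite mxE mul0r. Qed.

Lemma pairingBr v a c : pairing v (a - c) = pairing v a - pairing v c.
Proof.
by rewrite /pairing -sumrB; apply: eq_bigr => l _; rewrite !mxE intrD intrN mulrDr mulrN.
Qed.

Lemma coord_lt_sqnorm v e k :
  0 < e -> \sum_(l < n) (v 0 l) ^+ 2 < e ^+ 2 -> `|v 0 k| < e.
Proof.
move=> e_gt0 v_lt; have : (v 0 k) ^+ 2 < e ^+ 2.
  apply: le_lt_trans v_lt; rewrite (bigD1 k) //= lerDl.
  by apply: sumr_ge0 => l _; rewrite sqr_ge0.
rewrite -real_normK ?num_real // => vk_lt.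
by rewrite -(ltr_pXn2r (n := 2)) // ?nnegrE ?normr_ge0 ?ltW.
Qed.

Lemma pairing_small v c e : 0 < e -> \sum_(l < n) (v 0 l) ^+ 2 < e ^+ 2 ->
  `|pairing v c| <= e * \sum_(l < n) `|(c 0 l)%:~R : R|.
Proof.
move=> e_gt0 v_lt; rewrite /pairing mulr_sumr; apply: le_trans (ler_norm_sum _ _ _) _.
apply: ler_sum => l _; rewrite normrM; apply: ler_wpM2r; first exact: normr_ge0.
exact: ltW (coord_lt_sqnorm _ e_gt0 v_lt).
Qed.

Variables (s : nat) (b : 'I_s -> 'rV[int]_n -> R).

Lemma objval_addZ u v t i a : objval b (u + t *: v) i a = objval b u i a + t * pairing v a.
Proof. by rewrite /objval pairingD pairingZ addrAC. Qed.

Lemma objval_add u v i a : objval b (u + v) i a = objval b u i a + pairing v a.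
Proof. by have := objval_addZ u v 1 i a; rewrite scale1r mul1r. Qed.

End Pairing.

Section Active.
Variables (R : realType) (n s : nat).
Variables (A : 'I_s -> seq 'rV[int]_n) (b : 'I_s -> 'rV[int]_n -> R).
Implicit Types (xi eta : 'rV[R]_n) (a w : 'rV[int]_n).
Local Notation active := (active A b).
Local Notation objval := (objval b).

Lemma active_mem xi i a : active xi i a -> a \in A i.
Proof. by case/andP. Qed.

Lemma exists_active xi i : A i != [::] -> exists2 a, a \in A i & active xi i a.
Proof.
by move=> Ai0; have [a aA a_max] := exists_argmax (objval xi i) Ai0; exists a; rewrite /active ?aA.
Qed.

Lemma active_objval_eq xi i a w : active xi i a -> active xi i w ->
  objval xi i a = objval xi i w.
Proof.
case/andP => aA /allP a_max; case/andP => wA /allP w_max.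
by apply/eqP; rewrite eq_le (a_max _ wA) (w_max _ aA).
Qed.

Lemma nonactive_lt xi i a w : a \in A i -> ~~ active xi i a -> active xi i w ->
  objval xi i a < objval xi i w.
Proof.
move=> aA; rewrite /active aA /= => /allPn [a' a'A]; rewrite -ltNge => a_lt.
by case/andP => _ /allP /(_ a' a'A) w_max; apply: lt_le_trans w_max.
Qed.

Lemma nonactive_near xi i a : a \in A i -> ~~ active xi i a ->
  exists2 eps, 0 < eps & forall eta,
    \sum_(l < n) (eta 0 l - xi 0 l) ^+ 2 < eps -> ~~ active eta i a.
Proof.
move=> aA Na; have Ai0 : A i != [::] by apply/eqP => Ai0; rewrite Ai0 in aA.
have [w _ Aw] := exists_active xi Ai0.
set g := objval xi i w - objval xi i a.
have g_gt0 : 0 < g by rewrite subr_gt0 nonactive_lt.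
set C := \sum_(l < n) `|((w - a) 0 l)%:~R : R|.
have C_ge0 : 0 <= C by apply: sumr_ge0 => l _; apply: normr_ge0.
set e := g / (C + 1).
have e_gt0 : 0 < e by rewrite divr_gt0 // ltr_wpDl.
have eC_lt : e * C < g.
  by rewrite -[X in _ < X](divfK (x := C + 1)) ?gt_eqF ?ltr_wpDl // mulrDr mulr1 ltrDl.
exists (e ^+ 2); first exact: exprn_gt0.
move=> eta eta_near; apply/negP => /andP [_ /allP /(_ w (active_mem Aw))].
have : \sum_(l < n) ((eta - xi) 0 l) ^+ 2 < e ^+ 2.
  by move: eta_near; congr (_ < _); apply: eq_bigr => l _; rewrite !mxE.
move=> /(pairing_small (w - a) e_gt0); rewrite pairingBr -/C.
rewrite -[in objval eta i w](subrK xi eta) -[in objval eta i a](subrK xi eta).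
rewrite [_ - _ + _]addrC !objval_add => pair_le Hle.
have := ler_norm (- (pairing (eta - xi) w - pairing (eta - xi) a)); rewrite normrN.
move: pair_le Hle eC_lt; rewrite /g; lra.
Qed.

End Active.

Section Flag.
Variables (R : realType) (n : nat) (p : 'rV[R]_n) (M : 'M[R]_n) (d : nat).

Lemma in_flag_sub (xi eta : 'rV[R]_n) : in_flag p M d xi -> in_flag p M d eta ->
  exists2 v : 'rV[R]_n, (forall l : 'I_n, (d <= l)%N -> v 0 l = 0) & eta = xi + v *m M.
Proof.
move=> [cx ->] [ce ->]; set v := \row_l (if (l < d)%N then ce l - cx l else 0).
exists v => [l dl|]; first by rewrite mxE ltnNge dl.
have -> : v *m M = \sum_(l < n | (l < d)%N) (ce l - cx l) *: row l M.
  rewrite mulmx_sum_row (bigID (fun l : 'I_n => (l < d)%N)) /= [X in _ + X]big1 ?addr0.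
    by apply: eq_bigr => l dl; rewrite mxE dl.
  by move=> l; rewrite -leqNgt mxE => dl; rewrite ltnNge dl /= scale0r.
rewrite -addrA -big_split /=; congr (_ + _); apply: eq_bigr => l _.
by rewrite -scalerDl addrC subrK.
Qed.

Lemma in_flag_addZ (xi : 'rV[R]_n) (c : 'I_n -> R) t : in_flag p M d xi ->
  in_flag p M d (xi + t *: \sum_(l < n | (l < d)%N) c l *: row l M).
Proof.
move=> [cx ->]; exists (fun l => cx l + t * c l).
rewrite scaler_sumr -addrA -big_split /=; congr (_ + _).
by apply: eq_bigr => l _; rewrite scalerA -scalerDl.
Qed.

End Flag.

Section Vertex.
Variables (R : realType) (n s : nat).
Variables (A : 'I_s -> seq 'rV[int]_n) (b : 'I_s -> 'rV[int]_n -> R).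
Hypothesis A_uniq : forall i, uniq (A i).
Hypothesis A_neq0 : forall i, A i != [::].
Variables (p : 'rV[R]_n) (M : 'M[R]_n) (ms : 'I_s -> nat -> nat).
Variables (d : nat) (xi : 'rV[R]_n) (q : 'I_s).
Hypothesis d_range : (1 <= d <= n)%N.
Hypothesis sum_ms : (\sum_(i < s) ms i d.-1)%N = d.-1.
Hypothesis xi_vertex : is_vertex A b p M ms d xi.
Hypothesis mult_q : mult A b xi q = (ms q d.-1).+1.

Local Notation act := (active A b xi).
Local Notation mlt := (mult A b xi).
Local Notation ov := (objval b).

Definition actives i := filter (act i) (A i).

Lemma mem_actives i a : (a \in actives i) = act i a.
Proof. by rewrite mem_filter andb_idr // => /active_mem. Qed.

Lemma size_actives i : size (actives i) = (mlt i).+1.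
Proof.
rewrite size_filter /mult prednK //; have [a aA Aa] := exists_active b xi (A_neq0 i).
by rewrite -has_count; apply/hasP; exists a.
Qed.

Lemma count_active i : count (act i) (A i) = (mlt i).+1.
Proof. by rewrite -size_filter size_actives. Qed.

Lemma actives_uniq i : uniq (actives i).
Proof. exact: filter_uniq. Qed.

Definition base_pt i := head 0 (actives i).

Lemma actives_cons i : actives i = base_pt i :: behead (actives i).
Proof. by move: (size_actives i); rewrite /base_pt; case: (actives i). Qed.

Lemma base_pt_active i : act i (base_pt i).
Proof. by rewrite -mem_actives actives_cons mem_head. Qed.

Lemma mem_behead_actives i a :
  (a \in behead (actives i)) = act i a && (a != base_pt i).
Proof.
have := actives_uniq i; rewrite -mem_actives [in RHS]actives_cons in_cons /=.
rewrite [in uniq _]actives_cons /= => /andP [base_notin _].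
by case: (altP (a =P base_pt i)) => [-> | _] //=; [exact: negbTE | rewrite andbT].
Qed.

Definition lambda i := ov xi i (base_pt i).

Lemma active_objval i a : act i a -> ov xi i a = lambda i.
Proof. by move=> Aa; apply: active_objval_eq (base_pt_active i). Qed.

Lemma mult_ge i : (ms i d.-1 <= mlt i)%N.
Proof. by case: xi_vertex => [[_ ms_le] _]. Qed.

Lemma sum_mult : (\sum_i mlt i)%N = d.
Proof. by case: xi_vertex. Qed.

Lemma mult_neq_q i : i != q -> mlt i = ms i d.-1.
Proof.
apply: (sum_excess1 (f := mlt) (g := fun i => ms i d.-1) mult_ge mult_q).
by rewrite sum_mult sum_ms; case/andP: d_range; case: d.
Qed.

Lemma mult_q_gt0 : (0 < mlt q)%N.
Proof. by rewrite mult_q. Qed.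

(* The d non-base active points, enumerated in a fixed order: row k of the
   linear system below belongs to the k-th of them. *)
Definition nonbase := [seq (i, a) | i <- enum 'I_s, a <- behead (actives i)].

Lemma size_nonbase : size nonbase = d.
Proof.
rewrite size_allpairs_dep sumnE big_map big_enum /= -sum_mult.
by apply: eq_bigr => i _; rewrite size_behead size_actives.
Qed.

Lemma mem_nonbase i a : ((i, a) \in nonbase) = act i a && (a != base_pt i).
Proof.
rewrite -mem_behead_actives.
apply/allpairsPdep/idP => [[i' [a' [_ a'i' [-> ->]]]] // | ai].
by exists i, a; rewrite mem_enum.
Qed.

Lemma nonbase_uniq : uniq nonbase.
Proof.
apply: allpairs_uniq_dep; first exact: enum_uniq.
  by move=> i _; have := actives_uniq i; rewrite actives_cons => /andP [].
by move=> [i a] [j c] _ _ /= [-> ->].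
Qed.

Definition row_pt (k : nat) := nth (q, 0) nonbase k.

Lemma row_pt_active k : (k < d)%N -> act (row_pt k).1 (row_pt k).2 /\
  (row_pt k).2 != base_pt (row_pt k).1.
Proof.
rewrite -size_nonbase => /(mem_nth (q, 0)); rewrite -/(row_pt k).
by case: (row_pt k) => i a; rewrite mem_nonbase => /andP.
Qed.

Lemma row_pt_inj (k k' : 'I_n) : (k < d)%N -> (k' < d)%N -> row_pt k' = row_pt k -> k' = k.
Proof.
move=> kd k'd E; apply/val_inj/eqP => /=.
by rewrite -(nth_uniq (q, 0) _ _ nonbase_uniq) ?size_nonbase //; apply/eqP.
Qed.

Lemma row_pt_onto i a : act i a -> a != base_pt i ->
  exists2 k : 'I_n, (k < d)%N & row_pt k = (i, a).
Proof.
move=> Aa a_nb; have ia_in : (i, a) \in nonbase by rewrite mem_nonbase Aa.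
have kd : (index (i, a) nonbase < d)%N by rewrite -size_nonbase index_mem.
have kn : (index (i, a) nonbase < n)%N by case/andP: d_range => _; apply: leq_trans kd.
by exists (Ordinal kn); rewrite // /row_pt nth_index.
Qed.

Lemma row_pt_base_neq k k' : (k < d)%N -> ((row_pt k').1, base_pt (row_pt k').1) != row_pt k.
Proof.
move=> kd; have [_ not_base] := row_pt_active kd; apply/negP => /eqP E.
by move: not_base; rewrite -E eqxx.
Qed.

Definition all_pts := flatten [seq A i | i <- enum 'I_s].

Lemma mem_all_pts i a : a \in A i -> a \in all_pts.
Proof. by move=> aA; apply/flatten_mapP; exists i; rewrite ?mem_enum. Qed.

Definition vertex_cfg : {ffun 'I_n -> 'I_(size all_pts).+1 * 'I_(size all_pts).+1} :=
  [ffun k : 'I_n => (inord (index (row_pt k).2 all_pts),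
                     inord (index (base_pt (row_pt k).1) all_pts))].

Definition vertex_diff_mx : 'M[R]_n := @diff_mx R n all_pts d vertex_cfg.

Lemma vertex_diff_mxE (k c : 'I_n) : (k < d)%N ->
  vertex_diff_mx k c = (((row_pt k).2 - base_pt (row_pt k).1) 0 c)%:~R.
Proof.
move=> kd; rewrite /vertex_diff_mx /diff_mx mxE kd ffunE /=.
have [Aa _] := row_pt_active kd.
rewrite !inordK ?ltnS ?index_size // !nth_index //.
  exact: (mem_all_pts (active_mem (base_pt_active _))).
exact: (mem_all_pts (active_mem Aa)).
Qed.

Lemma vertex_diff_mx_high (k c : 'I_n) : (d <= k)%N -> vertex_diff_mx k c = 0.
Proof. by move=> dk; rewrite /vertex_diff_mx /diff_mx mxE ltnNge dk. Qed.

Definition active_pairs := [seq (i, a) | i <- enum 'I_s, a <- actives i].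

Lemma mem_active_pairs i a : ((i, a) \in active_pairs) = act i a.
Proof.
rewrite -mem_actives; apply/allpairsPdep/idP => [[i' [a' [_ a'i' [-> ->]]]] // | ai].
by exists i, a; rewrite mem_enum.
Qed.

Lemma active_pairs_uniq : uniq active_pairs.
Proof.
apply: allpairs_uniq_dep; first exact: enum_uniq.
  by move=> i _; exact: actives_uniq.
by move=> [i a] [j c] _ _ /= [-> ->].
Qed.

Lemma size_active_pairs : size active_pairs = (d + s)%N.
Proof.
rewrite size_allpairs_dep sumnE big_map big_enum /= -sum_mult.
rewrite -[s in (_ + s)%N]card_ord -sum1_card -big_split /=.
by apply: eq_bigr => i _; rewrite size_actives addn1.
Qed.

(* The lifted active points lie on the hyperplane {y | y . normal = 0},
   which misses the vertical vector last_vec. *)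
Definition vertex_normal : 'cV[R]_(s + n + 1) :=
  col_mx (col_mx (\col_i lambda i) xi^T) ((-1)%:M).

Lemma lift_vec_normal i a : act i a -> lift_vec b i a *m vertex_normal = 0.
Proof.
move=> Aa; apply/rowP => z; rewrite (ord1 z) [RHS]mxE.
rewrite /lift_vec /vertex_normal !mul_row_col mulNmx -rowE.
rewrite mul_scalar_mx !mxE eqxx mulr1n mulrN1 -(active_objval Aa) /objval /pairing.
have -> : \sum_j (a ^ [eta intr])%sesqui 0 j * xi^T j 0 = \sum_(j < n) xi 0 j * (a 0 j)%:~R.
  by apply: eq_bigr => j _; rewrite !mxE mulrC.
by rewrite opprB subrK subrr.
Qed.

Lemma last_vec_normal : last_vec R n s *m vertex_normal = (-1)%:M.
Proof. by rewrite /last_vec /vertex_normal mul_row_col mul0mx add0r mul_scalar_mx scale1r. Qed.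

Lemma lift_vec_blockE i a r : lift_vec b i a 0 (lshift 1 (lshift n r)) = - (r == i)%:R.
Proof. by rewrite /lift_vec !row_mxEl !mxE eqxx. Qed.

Lemma lift_vec_ptE i a c : lift_vec b i a 0 (lshift 1 (rshift s c)) = (a 0 c)%:~R.
Proof. by rewrite /lift_vec row_mxEl row_mxEr !mxE. Qed.

Definition row_lift (k : nat) := lift_vec b (row_pt k).1 (row_pt k).2.
Definition row_base_lift (k : nat) := lift_vec b (row_pt k).1 (base_pt (row_pt k).1).

Definition row_comb (x : 'rV[R]_n) :=
  \sum_(k < n | (k < d)%N) x 0 k *: (row_lift k - row_base_lift k).

Lemma row_comb_normal x : row_comb x *m vertex_normal = 0.
Proof.
rewrite mulmx_suml big1 // => k kd; have [Aa _] := row_pt_active kd.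
by rewrite -scalemxAl mulmxBl !lift_vec_normal ?subrr ?scaler0 // base_pt_active.
Qed.

(* Block coordinates cancel within each difference; the point coordinates
   are those of x *m vertex_diff_mx. *)
Lemma row_comb_vertical x : x *m vertex_diff_mx = 0 ->
  row_comb x = row_comb x 0 (rshift (s + n) 0) *: last_vec R n s.
Proof.
move=> xD; apply/rowP => j; rewrite mxE /last_vec.
rewrite -(splitK j); case: (split j) => [j'|j''] /=; last first.
  by rewrite row_mxEr mxE (ord1 j'') eqxx mulr1.
rewrite row_mxEl mxE mulr0 /row_comb summxE.
rewrite -(splitK j'); case: (split j') => [r|c] /=.
  apply: big1 => k _.
  by rewrite mxE [X in _ * X]mxE [(- row_base_lift _) _ _]mxE !lift_vec_blockE subrr mulr0.
transitivity ((x *m vertex_diff_mx) 0 c); last by rewrite xD mxE.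
rewrite mxE [RHS](bigID (fun k : 'I_n => (k < d)%N)) /=.
rewrite [X in _ = _ + X]big1 ?addr0; last first.
  by move=> k; rewrite -leqNgt => dk; rewrite vertex_diff_mx_high ?mulr0.
apply: eq_bigr => k kd; rewrite mxE [X in _ * X]mxE [(- row_base_lift _) _ _]mxE.
by rewrite !lift_vec_ptE vertex_diff_mxE // !mxE rmorphB.
Qed.

Lemma row_comb_eq0 x : x *m vertex_diff_mx = 0 -> row_comb x = 0.
Proof.
move=> xD; have := row_comb_normal x; rewrite {1}(row_comb_vertical xD).
rewrite -scalemxAl last_vec_normal => /matrixP /(_ 0 0).
rewrite !mxE eqxx mulr1n mulrN1 => /eqP; rewrite oppr_eq0 => /eqP c0.
by rewrite row_comb_vertical // c0 scale0r.
Qed.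

Definition row_coef (x : 'rV[R]_n) (y : 'I_s * 'rV[int]_n) : R :=
  \sum_(k < n | (k < d)%N) x 0 k *
    ((row_pt k == y)%:R - (((row_pt k).1, base_pt (row_pt k).1) == y)%:R).

Lemma row_comb_expand x :
  row_comb x = \sum_(y <- active_pairs) row_coef x y *: lift_vec b y.1 y.2.
Proof.
rewrite /row_coef; under eq_bigr do rewrite scaler_suml.
rewrite exchange_big /=; apply: eq_bigr => k kd.
under eq_bigr do rewrite -scalerA.
rewrite -scaler_sumr; congr (_ *: _).
under eq_bigr do rewrite scalerBl.
have [Aa _] := row_pt_active kd.
rewrite sumrB !(sum_indicator_scale _ active_pairs_uniq) //.
  by case: (row_pt k) Aa => i a /= _; rewrite mem_active_pairs base_pt_active.
by case: (row_pt k) Aa => i a /=; rewrite mem_active_pairs.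
Qed.

Lemma row_coef_row_pt x (k : 'I_n) : (k < d)%N -> row_coef x (row_pt k) = x 0 k.
Proof.
move=> kd; rewrite /row_coef (bigD1 k) //= eqxx (negbTE (row_pt_base_neq _ kd)).
rewrite subr0 mulr1 big1 ?addr0 // => k' /andP [k'd k'k].
rewrite (negbTE (row_pt_base_neq _ kd)) subr0.
case: eqP => [E | _]; last by rewrite mulr0.
by move: k'k; rewrite (row_pt_inj kd k'd E) eqxx.
Qed.

Lemma vertex_diff_mx_free : general_position A b -> (s <= n)%N ->
  forall x : 'rV[R]_n, x *m vertex_diff_mx = 0 -> forall k : 'I_n, (k < d)%N -> x 0 k = 0.
Proof.
move=> gp sn x xD k kd.
have S_mem y : y \in active_pairs -> y.2 \in A y.1.
  by case: y => i a; rewrite mem_active_pairs => /active_mem.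
have S_size : (size active_pairs <= n + s + 1)%N.
  by rewrite size_active_pairs; case/andP: d_range; lia.
case: (gp _ active_pairs_uniq S_mem S_size) => [indep | span].
  rewrite -row_coef_row_pt //; apply: (lin_indep_map active_pairs_uniq indep).
    by rewrite -row_comb_expand row_comb_eq0.
  by have [Aa _] := row_pt_active kd; case: (row_pt k) Aa => i a; rewrite mem_active_pairs.
have : last_vec R n s *m vertex_normal = 0.
  apply: (in_span_orth span) => u /mapP [[i a]].
  by rewrite mem_active_pairs => Aa ->; exact: lift_vec_normal.
rewrite last_vec_normal => /matrixP /(_ 0 0); rewrite !mxE eqxx mulr1n => /eqP.
by rewrite oppr_eq0 oner_eq0.
Qed.

Definition vertex_mx := @flag_mx R n all_pts d vertex_cfg M.
Hypothesis vertex_mx_unit : vertex_mx \in unitmx.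

Lemma vertex_mx_col (c : 'rV[R]_n) (k : 'I_n) : (vertex_mx *m c^T) k 0 =
  if (k < d)%N then pairing (c *m M) (row_pt k).2 - pairing (c *m M) (base_pt (row_pt k).1)
  else c 0 k.
Proof.
rewrite /vertex_mx /flag_mx mulmxDl -mulmxA -trmx_mul /low_idmx mul_diag_mx !mxE.
case: ifP => kd.
  rewrite leqNgt kd mul0r addr0 /pairing -sumrB -/vertex_diff_mx; apply: eq_bigr => j _.
  by rewrite vertex_diff_mxE // !mxE rmorphB /= mulrC mulrBr.
rewrite leqNgt kd mul1r big1 ?add0r // -/vertex_diff_mx => j _.
by rewrite vertex_diff_mx_high ?mul0r // leqNgt kd.
Qed.

(* Along the j-th edge the point drop_pt j of A_q falls behind the other
   active points of A_q at unit rate, all other active points staying tied. *)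
Definition drop_pt (j : nat) := nth 0 (actives q) j.

Definition drop_shift (j : nat) (i : 'I_s) (a : 'rV[int]_n) : R :=
  if (i == q) && (a == drop_pt j) then -1 else 0.

Definition ray_rhs (j : nat) : 'rV[R]_n :=
  \row_k (if (k < d)%N then drop_shift j (row_pt k).1 (row_pt k).2
                          - drop_shift j (row_pt k).1 (base_pt (row_pt k).1) else 0).

Definition ray_coef j := ray_rhs j *m (invmx vertex_mx)^T.
Definition ray_dir j := ray_coef j *m M.

Lemma vertex_mx_ray_coef j : vertex_mx *m (ray_coef j)^T = (ray_rhs j)^T.
Proof. by rewrite /ray_coef trmx_mul trmxK mulKVmx. Qed.

Lemma ray_coef_uniq (c : 'rV[R]_n) (t : R) j :
  vertex_mx *m c^T = t *: (ray_rhs j)^T -> c = t *: ray_coef j.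
Proof.
move=> E; apply: trmx_inj; rewrite linearZ /= /ray_coef trmx_mul trmxK.
by rewrite -(mulKmx vertex_mx_unit c^T) E scalemxAr.
Qed.

Lemma ray_coef_high j (k : 'I_n) : (d <= k)%N -> ray_coef j 0 k = 0.
Proof.
move=> dk; have kd : (k < d)%N = false by rewrite ltnNge dk.
have := congr1 (fun X : 'M[R]_(n, 1) => X k 0) (vertex_mx_ray_coef j).
by rewrite /= vertex_mx_col kd => ->; rewrite !mxE kd.
Qed.

Lemma ray_dir_flag j : ray_dir j = \sum_(l < n | (l < d)%N) ray_coef j 0 l *: row l M.
Proof.
rewrite /ray_dir mulmx_sum_row (bigID (fun l : 'I_n => (l < d)%N)) /= [X in _ + X]big1 ?addr0 //.
by move=> l; rewrite -leqNgt => dl; rewrite ray_coef_high ?scale0r.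
Qed.

Definition ray_speed j i := pairing (ray_dir j) (base_pt i) - drop_shift j i (base_pt i).

Lemma pairing_ray_dir j i a : act i a -> pairing (ray_dir j) a = ray_speed j i + drop_shift j i a.
Proof.
move=> Aa; case: (altP (a =P base_pt i)) => [-> | a_nb]; first by rewrite /ray_speed subrK.
have [k kd row_k] := row_pt_onto Aa a_nb.
have := congr1 (fun X : 'M[R]_(n, 1) => X k 0) (vertex_mx_ray_coef j).
rewrite /= vertex_mx_col kd !mxE kd row_k /= -/(ray_dir j) /ray_speed; lra.
Qed.

Lemma drop_pt_active j : (j < (mlt q).+1)%N -> act q (drop_pt j).
Proof. by move=> jq; rewrite -mem_actives mem_nth // size_actives. Qed.

Lemma drop_pt_inj j j' : (j < (mlt q).+1)%N -> (j' < (mlt q).+1)%N ->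
  drop_pt j = drop_pt j' -> j = j'.
Proof.
move=> jq j'q E; apply/eqP.
by rewrite -(nth_uniq 0 _ _ (actives_uniq q)) ?size_actives // -/(drop_pt j) E.
Qed.

Lemma sum_drop_shift i a : act i a ->
  \sum_(j < (mlt q).+1) drop_shift j i a = if i == q then -1 else 0.
Proof.
move=> Aa; rewrite /drop_shift; case: (altP (i =P q)) => [Ei | Ni] /=; last by rewrite big1.
subst i; have a_in : a \in actives q by rewrite mem_actives.
have ja : (index a (actives q) < (mlt q).+1)%N by rewrite -size_actives index_mem.
rewrite (bigD1 (Ordinal ja)) //= /drop_pt nth_index // eqxx big1 ?addr0 // => j j_ne.
case: eqP => // Ea; exfalso; move/eqP: j_ne; apply; apply/val_inj => /=.
by rewrite Ea index_uniq ?size_actives ?actives_uniq.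
Qed.

Lemma sum_ray_rhs : \sum_(j < (mlt q).+1) ray_rhs j = 0.
Proof.
apply/rowP => k; rewrite summxE [RHS]mxE.
case: (ltnP k d) => kd; last by apply: big1 => j _; rewrite mxE ltnNge kd.
have [Aa _] := row_pt_active kd.
under eq_bigr do rewrite mxE kd.
by rewrite sumrB !sum_drop_shift ?base_pt_active // subrr.
Qed.

Lemma sum_ray_dir : \sum_(j < (mlt q).+1) ray_dir j = 0.
Proof. by rewrite /ray_dir /ray_coef -!mulmx_suml sum_ray_rhs !mul0mx. Qed.

Definition ray_active j i a := act i a && ~~ ((i == q) && (a == drop_pt j)).

Definition all_pairs := [seq (i, a) | i <- enum 'I_s, a <- A i].

(* Each inactive constraint contributes its gap lambda_i - objval and the rate
   at which the ray closes it. *)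
Definition exit_data j : seq (R * R) :=
  [seq (lambda x.1 - ov xi x.1 x.2, pairing (ray_dir j) x.2 - ray_speed j x.1)
  | x <- all_pairs & ~~ act x.1 x.2].

Definition ray_end j := exit_time (exit_data j).

Lemma all_exit_data j (P : R * R -> bool) :
  all P (exit_data j) <-> (forall i a, a \in A i -> ~~ act i a ->
     P (lambda i - ov xi i a, pairing (ray_dir j) a - ray_speed j i)).
Proof.
rewrite all_map all_filter; split.
  by move/all_allpairsP => Pall i a aA Na; have := Pall i a (mem_enum _ i) aA; rewrite /= Na.
move=> Pall; apply/all_allpairsP => i a _ aA /=.
by apply/implyP => Na; apply: Pall.
Qed.

Lemma exit_data_gap_gt0 j : all (fun x => 0 < x.1) (exit_data j).
Proof.
apply/all_exit_data => i a aA Na /=; rewrite subr_gt0.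
exact: (nonactive_lt aA Na (base_pt_active i)).
Qed.

Lemma ray_end_gt0 j : match ray_end j return Prop with Some r => 0 < r | None => True end.
Proof. exact: (exit_time_gt0 (exit_data_gap_gt0 j)). Qed.

Lemma exists_ray_active j i : exists w, ray_active j i w.
Proof.
case: (altP (i =P q)) => [-> | Ni]; last first.
  by exists (base_pt i); rewrite /ray_active base_pt_active /= (negbTE Ni).
have : (0 < size (behead (actives q)))%N by rewrite size_behead size_actives /= mult_q_gt0.
move=> /(mem_nth 0); set x := nth _ _ _; rewrite mem_behead_actives => /andP [Ax x_nb].
case: (altP (base_pt q =P drop_pt j)) => E.
  by exists x; rewrite /ray_active Ax eqxx /= -E x_nb.
by exists (base_pt q); rewrite /ray_active base_pt_active eqxx /= E.
Qed.

Lemma ray_active_active j i a : ray_active j i a -> act i a.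
Proof. by case/andP. Qed.

Lemma drop_shift_ray_active j i a : ray_active j i a -> drop_shift j i a = 0.
Proof. by case/andP => _ /negbTE na; rewrite /drop_shift na. Qed.

Lemma drop_shift_le0 j i a : drop_shift j i a <= 0.
Proof. by rewrite /drop_shift; case: ifP => _; rewrite ?lerN10. Qed.

Lemma objval_ray_dir j t i a : act i a ->
  ov (xi + t *: ray_dir j) i a = lambda i + t * ray_speed j i + t * drop_shift j i a.
Proof.
by move=> Aa; rewrite objval_addZ (active_objval Aa) (pairing_ray_dir j Aa) mulrDr addrA.
Qed.

Lemma ray_activeP j t : 0 < t ->
  (forall i a, active A b (xi + t *: ray_dir j) i a = ray_active j i a) <->
  lt_opt t (ray_end j).
Proof.
move=> t_gt0; rewrite /ray_end exit_timeP ?exit_data_gap_gt0 // all_exit_data /=.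
set eta := xi + t *: ray_dir j; split.
  move=> eta_act i a aA Na; have [w Rw] := exists_ray_active j i.
  have Naeta : ~~ active A b eta i a by rewrite eta_act /ray_active (negbTE Na).
  have := nonactive_lt aA Naeta (w := w); rewrite eta_act Rw => /(_ isT).
  rewrite /eta (objval_ray_dir j t (ray_active_active Rw)) (drop_shift_ray_active Rw).
  rewrite mulr0 addr0 objval_addZ => a_lt; rewrite mulrBr; lra.
move=> gaps i a; case aA: (a \in A i); last by rewrite /active aA /ray_active /active aA.
have [w Rw] := exists_ray_active j i.
have inactive_lt a' : a' \in A i -> ~~ act i a' ->
    ov eta i a' < lambda i + t * ray_speed j i.
  by move=> a'A Na'; have := gaps i a' a'A Na'; rewrite /eta objval_addZ mulrBr; lra.
case Ra: (ray_active j i a).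
  rewrite /active aA /=; apply/allP => a' a'A.
  rewrite /eta (objval_ray_dir j t (ray_active_active Ra)) (drop_shift_ray_active Ra).
  rewrite mulr0 addr0; case Aa': (act i a'); last by apply/ltW/inactive_lt; rewrite ?Aa'.
  by rewrite (objval_ray_dir j t Aa'); have := drop_shift_le0 j i a'; nra.
apply/negbTE/negP => /andP [_ /allP /(_ w (active_mem (ray_active_active Rw)))].
suff : ov eta i a < ov eta i w by lra.
rewrite /eta (objval_ray_dir j t (ray_active_active Rw)) (drop_shift_ray_active Rw) mulr0 addr0.
case Aa: (act i a); last by apply: inactive_lt; rewrite ?aA ?Aa.
move: Ra; rewrite /ray_active Aa /= => /negbFE drop_a.
by rewrite (objval_ray_dir j t Aa) /drop_shift drop_a; lra.
Qed.

Definition vertex_ray j := ray xi (ray_dir j) (ray_end j).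

Definition ray_mid j : R := if ray_end j is Some r then r / 2 else 1.

Lemma ray_mid_gt0 j : 0 < ray_mid j.
Proof. by rewrite /ray_mid; move: (ray_end_gt0 j); case: (ray_end j) => // r r0; rewrite divr_gt0. Qed.

Lemma lt_opt_ray_mid j t : 0 < t -> t <= ray_mid j -> lt_opt t (ray_end j).
Proof.
rewrite /ray_mid; move: (ray_end_gt0 j); case: (ray_end j) => //= r r0 _ t_le.
by apply: le_lt_trans t_le _; lra.
Qed.

Lemma vertex_ray_pt j t : 0 < t -> lt_opt t (ray_end j) -> vertex_ray j (xi + t *: ray_dir j).
Proof. by move=> t_gt0 t_lt; exists t; split => //; split => //; move: t_lt; case: (ray_end j). Qed.

Lemma vertex_ray_active j eta : vertex_ray j eta ->
  forall i a, active A b eta i a = ray_active j i a.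
Proof. by case=> t [t_gt0 [t_lt ->]]; apply/(ray_activeP j t_gt0); move: t_lt; case: (ray_end j). Qed.

Lemma xi_flag : in_flag p M d xi.
Proof. by case: xi_vertex => [[]]. Qed.

Lemma vertex_ray_flag j eta : vertex_ray j eta -> in_flag p M d eta.
Proof. by case=> t [_ [_ ->]]; rewrite ray_dir_flag; apply: in_flag_addZ xi_flag. Qed.

(* A point of F_d with active set ray_active j lies on the j-th ray: the
   differences of objective values it produces form t times the right-hand
   side ray_rhs j, and the system is invertible. *)
Lemma ray_active_point j (v : 'rV[R]_n) : (j < (mlt q).+1)%N ->
  (forall l : 'I_n, (d <= l)%N -> v 0 l = 0) ->
  (forall i a, active A b (xi + v *m M) i a = ray_active j i a) ->
  vertex_ray j (xi + v *m M).
Proof.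
move=> jq v_high eta_act; set eta := xi + v *m M in eta_act *.
have [wq Rwq] := exists_ray_active j q.
pose t := ov eta q wq - ov eta q (drop_pt j).
have tied i : exists L, forall x, act i x -> ov eta i x = L + t * drop_shift j i x.
  have [w Rw] := exists_ray_active j i; exists (ov eta i w) => x Ax.
  case Rx: (ray_active j i x).
    by rewrite (drop_shift_ray_active Rx) mulr0 addr0; apply: (active_objval_eq (A := A)); rewrite eta_act.
  move: Rx; rewrite /ray_active Ax /= => /negbFE /andP [/eqP Ei /eqP Ex]; subst i x.
  have -> : ov eta q w = ov eta q wq by apply: (active_objval_eq (A := A)); rewrite eta_act.
  by rewrite /drop_shift !eqxx /= /t; lra.
have pairing_v i x : pairing (v *m M) x = ov eta i x - ov xi i x.
  by rewrite /eta objval_add; lra.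
have sys : vertex_mx *m v^T = t *: (ray_rhs j)^T.
  apply/colP => k; rewrite vertex_mx_col !mxE.
  case: ifP => kd; last by rewrite v_high ?mulr0 // leqNgt kd.
  have [Aa _] := row_pt_active kd; have [L tiedL] := tied (row_pt k).1.
  rewrite !(pairing_v (row_pt k).1) tiedL // tiedL ?base_pt_active //.
  by rewrite (active_objval Aa) (active_objval (base_pt_active _)); lra.
have t_gt0 : 0 < t.
  have Nd : ~~ active A b eta q (drop_pt j) by rewrite eta_act /ray_active !eqxx andbF.
  have := nonactive_lt (active_mem (drop_pt_active jq)) Nd (w := wq).
  by rewrite eta_act Rwq /t subr_gt0; apply.
have eta_ray : eta = xi + t *: ray_dir j by rewrite /eta (ray_coef_uniq sys) /ray_dir scalemxAl.
rewrite eta_ray; apply: vertex_ray_pt => //.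
by apply/(ray_activeP j t_gt0); rewrite -eta_ray.
Qed.

Lemma vertex_rayP j eta : (j < (mlt q).+1)%N ->
  vertex_ray j eta <-> in_flag p M d eta /\ forall i a, active A b eta i a = ray_active j i a.
Proof.
move=> jq; split => [eta_ray | [eta_flag eta_act]].
  by split; [exact: vertex_ray_flag eta_ray | exact: vertex_ray_active].
have [v v_high eta_v] := in_flag_sub xi_flag eta_flag.
by rewrite eta_v in eta_act *; exact: ray_active_point.
Qed.

Lemma count_ray_active j i : (j < (mlt q).+1)%N -> count (ray_active j i) (A i) = (ms i d.-1).+1.
Proof.
move=> jq; case: (altP (i =P q)) => [-> | Ni]; last first.
  rewrite -(mult_neq_q Ni) -count_active; apply: eq_count => a.
  by rewrite /ray_active (negbTE Ni) andbT.
have := count_predUI (ray_active j q) (pred1 (drop_pt j)) (A q).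
have -> : count (predU (ray_active j q) (pred1 (drop_pt j))) (A q) = count (act q) (A q).
  apply: eq_in_count => a _; rewrite /= /ray_active eqxx /=.
  by case: eqP => [-> | _]; rewrite ?(drop_pt_active jq) ?orbT ?andbT ?orbF.
have -> : count (predI (ray_active j q) (pred1 (drop_pt j))) (A q) = 0%N.
  transitivity (count pred0 (A q)); last exact: count_pred0.
  by apply: eq_count => a /=; rewrite /ray_active; case: (a =P drop_pt j) => [->|]; rewrite ?eqxx /= ?andbF.
rewrite count_uniq_mem // (active_mem (drop_pt_active jq)) count_active mult_q.
by move=> /eqP; rewrite addn0 addn1 eqSS => /eqP.
Qed.

Lemma ray_dir_neq0 j : (j < (mlt q).+1)%N -> ray_dir j != 0.
Proof.
move=> jq; apply/eqP => dir0; have [w Rw] := exists_ray_active j q.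
have := pairing_ray_dir j (drop_pt_active jq); have := pairing_ray_dir j (ray_active_active Rw).
by rewrite dir0 !pairing0 (drop_shift_ray_active Rw) /drop_shift !eqxx /=; lra.
Qed.

Lemma vertex_ray_one_dim j : (j < (mlt q).+1)%N -> one_dim (vertex_ray j).
Proof.
move=> jq; have mid_gt0 := ray_mid_gt0 j; split.
  by exists xi, (ray_dir j) => eta [t [_ [_ ->]]]; exists t.
exists (xi + ray_mid j *: ray_dir j), (xi + (ray_mid j / 2) *: ray_dir j).
split; [|split].
- by apply: vertex_ray_pt; last apply: lt_opt_ray_mid.
- by apply: vertex_ray_pt; [|apply: lt_opt_ray_mid]; lra.
- move/(congr1 (fun x => x - xi)); rewrite ![_ + _ - xi]addrC !addKr => /eqP.
  rewrite -subr_eq0 -scalerBl scaler_eq0 (negbTE (ray_dir_neq0 jq)) orbF; lra.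
Qed.

Lemma vertex_ray_edge j : (j < (mlt q).+1)%N -> is_edge A b p M ms d (vertex_ray j).
Proof.
move=> jq; split; first exact: vertex_ray_one_dim.
exists (ray_active j); split; first by move=> i a /ray_active_active /active_mem.
by split => [i | eta]; [exact: count_ray_active | exact: vertex_rayP].
Qed.

Lemma vertex_ray_endpoint j : (j < (mlt q).+1)%N -> endpoint xi (vertex_ray j).
Proof.
move=> jq; split.
  move/vertex_ray_active => /(_ q (drop_pt j)); rewrite /ray_active !eqxx andbF.
  by rewrite (drop_pt_active jq).
move=> eps eps_gt0; set K := \sum_(l < n) (ray_dir j 0 l) ^+ 2.
have K_ge0 : 0 <= K by apply: sumr_ge0 => l _; rewrite sqr_ge0.
set e := eps / (K + 1).
have e_gt0 : 0 < e by rewrite divr_gt0 // ltr_wpDl.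
have eK : e * (K + 1) = eps by rewrite /e divfK // gt_eqF // ltr_wpDl.
set t := Num.min (Num.min (ray_mid j) 1) e.
have t_gt0 : 0 < t by rewrite /t !lt_min ray_mid_gt0 e_gt0 ltr01.
have [t_mid t_1 t_e] : [/\ t <= ray_mid j, t <= 1 & t <= e].
  by rewrite /t !ge_min !lexx !orbT.
exists (xi + t *: ray_dir j); split; first by apply: vertex_ray_pt => //; apply: lt_opt_ray_mid.
have -> : \sum_(l < n) ((xi + t *: ray_dir j) 0 l - xi 0 l) ^+ 2 = t ^+ 2 * K.
  by rewrite /K mulr_sumr; apply: eq_bigr => l _; rewrite !mxE addrC addKr exprMn.
have : 0 <= t * (1 - t) * K by rewrite !mulr_ge0 ?subr_ge0 // ltW.
have : 0 <= (e - t) * K by rewrite mulr_ge0 // subr_ge0.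
nra.
Qed.

Lemma vertex_ray_inj j j' : (j < (mlt q).+1)%N -> (j' < (mlt q).+1)%N ->
  (forall eta, vertex_ray j eta <-> vertex_ray j' eta) -> j = j'.
Proof.
move=> jq j'q same.
have mid_ray : vertex_ray j (xi + ray_mid j *: ray_dir j).
  by apply: vertex_ray_pt; [apply: ray_mid_gt0 | apply: lt_opt_ray_mid; rewrite ?ray_mid_gt0].
have := vertex_ray_active mid_ray q (drop_pt j).
rewrite (vertex_ray_active ((same _).1 mid_ray)) /ray_active !eqxx andbF (drop_pt_active jq) /=.
by case: eqP => // /(drop_pt_inj jq j'q).
Qed.

(* Continuity: near xi nothing inactive at xi becomes active. *)
Lemma edge_active_sub (E : 'rV[R]_n -> Prop) (W : 'I_s -> pred 'rV[int]_n) :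
  (forall i a, W i a -> a \in A i) ->
  (forall eta, E eta -> forall i a, active A b eta i a = W i a) ->
  endpoint xi E -> forall i a, W i a -> act i a.
Proof.
move=> WA E_act [_ close] i a Wa; apply/negPn/negP => Na.
have [eps eps_gt0 near] := nonactive_near (WA _ _ Wa) Na.
have [eta [Eeta eta_near]] := close eps eps_gt0.
by move: (near eta eta_near); rewrite E_act // Wa.
Qed.

(* By the counts, W keeps all active points outside A_q and drops exactly
   one active point of A_q. *)
Lemma active_sub_ray_active (W : 'I_s -> pred 'rV[int]_n) :
  (forall i a, W i a -> a \in A i) -> (forall i a, W i a -> act i a) ->
  (forall i, count (W i) (A i) = (ms i d.-1).+1) ->
  exists j : 'I_(mlt q).+1, forall i a, W i a = ray_active j i a.
Proof.
move=> WA W_act W_count.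
have W_other i : i != q -> {in A i, forall a, W i a = act i a}.
  move=> Ni a aA; apply/idP/idP; first exact: W_act.
  by apply: (sub_count_eq (W_act i) _ aA); rewrite W_count count_active mult_neq_q.
have dropped1 : count (predI (predC (W q)) (act q)) (A q) = 1%N.
  have := count_predC (W q) (filter (act q) (A q)).
  rewrite !count_filter size_filter count_active mult_q -(W_count q).
  have -> : count (predI (W q) (act q)) (A q) = count (W q) (A q).
    by apply: eq_count => a; rewrite /= andb_idr // => /W_act.
  lia.
have /hasP [a0 a0A /andP [Na0 Aa0]] : has (predI (predC (W q)) (act q)) (A q).
  by rewrite has_count dropped1.
have j0q : (index a0 (actives q) < (mlt q).+1)%N by rewrite -size_actives index_mem mem_actives.
exists (Ordinal j0q) => i a.
have drop_a0 : drop_pt (Ordinal j0q) = a0 by rewrite /drop_pt /= nth_index // mem_actives.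
case aA: (a \in A i); last first.
  by rewrite /ray_active /active aA /=; apply/negbTE/negP => /WA; rewrite aA.
case: (altP (i =P q)) => [Ei | Ni]; last by rewrite W_other // /ray_active (negbTE Ni) andbT.
subst i; rewrite /ray_active drop_a0 eqxx /=.
case: (altP (a =P a0)) => [-> | Na]; first by rewrite andbF (negbTE Na0).
rewrite andbT; case Aa: (act q a); last by apply/negbTE/negP => /W_act; rewrite Aa.
apply/negPn/negP => NWa; move/negP: Na; apply.
by apply/eqP; apply: (count_eq1_eq dropped1 aA _ a0A); apply/andP.
Qed.

Lemma edge_vertex_ray E : is_edge A b p M ms d E -> endpoint xi E ->
  exists j : 'I_(mlt q).+1, forall eta, E eta <-> vertex_ray j eta.
Proof.
case=> _ [W [WA [W_count E_iff]]] E_end.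
have E_act eta : E eta -> forall i a, active A b eta i a = W i a.
  by move/E_iff => [].
have [j Wj] := active_sub_ray_active WA (edge_active_sub WA E_act E_end) W_count.
exists j => eta; rewrite E_iff vertex_rayP //.
by split => -[eta_flag eta_act]; split => // i a; rewrite eta_act Wj.
Qed.
End Vertex.

Theorem lemma3p1 (R : realType) (n s : nat)
  (A : 'I_s -> seq 'rV[int]_n) (b : 'I_s -> 'rV[int]_n -> R) :
  (1 <= n)%N -> (1 <= s <= n)%N ->
  (forall i, uniq (A i)) -> (forall i, A i != [::]) ->
  general_position A b ->
  (* genericity of the flag: outside the zero set of a nonzero polynomial *)
  exists P : {mpoly R[n + n * n]}, P != 0 /\
  forall (p : 'rV[R]_n) (M : 'M[R]_n),
    M \in unitmx -> P.@[flag_coords p M] != 0 ->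
  forall (mm : 'I_s -> nat), (\sum_(i < s) mm i)%N = n ->
  forall ms : 'I_s -> nat -> nat, valid_mseq n mm ms ->
  forall d : nat, (1 <= d <= n)%N ->
  forall xi : 'rV[R]_n, is_vertex A b p M ms d xi ->
  forall q : 'I_s, mult A b xi q = (ms q d.-1).+1 ->
  exists (D : 'I_(mult A b xi q).+1 -> 'rV[R]_n)
         (I : 'I_(mult A b xi q).+1 -> option R),
    (forall j, match I j return Prop with Some r => 0 < r | None => True end) /\
    (forall j, is_edge A b p M ms d (ray xi (D j) (I j)) /\
               endpoint xi (ray xi (D j) (I j))) /\
    (forall j j', j != j' ->
       ~ (forall eta, ray xi (D j) (I j) eta <-> ray xi (D j') (I j') eta)) /\
    (forall E : 'rV[R]_n -> Prop, is_edge A b p M ms d E -> endpoint xi E ->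
       exists j, forall eta, E eta <-> ray xi (D j) (I j) eta) /\
    \sum_j D j = 0.
Proof.
move=> _ /andP [_ sn] A_uniq A_neq0 gp.
exists (generic_flag_poly R (all_pts A)); split; first exact: generic_flag_poly_neq0.
move=> p M _ P_neq0 mm _ ms [_ sum_ms] d d_range xi xi_vertex q mult_q.
have sum_ms_pred : (\sum_(i < s) ms i d.-1)%N = d.-1.
  by apply: sum_ms; case/andP: d_range => _; apply: leq_trans (leq_pred _).
have dn : (d < n.+1)%N by case/andP: d_range.
have unit : vertex_mx A b M d xi q \in unitmx.
  apply: (generic_flag_mx_unit (d := Ordinal dn) P_neq0); apply: flag_det_poly_neq0.
  exact: (vertex_diff_mx_free A_uniq A_neq0 d_range sum_ms_pred xi_vertex mult_q gp sn).
exists (ray_dir A b M d xi q), (ray_end A b M d xi q).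
split; first exact: ray_end_gt0.
split.
  move=> j; split.
    exact: (vertex_ray_edge A_uniq A_neq0 d_range sum_ms_pred xi_vertex mult_q unit).
  exact: (vertex_ray_endpoint A_uniq A_neq0 d_range xi_vertex mult_q unit).
split.
  move=> j j' /eqP j_neq same; apply/j_neq/val_inj.
  exact: (vertex_ray_inj A_uniq A_neq0 d_range xi_vertex mult_q unit (ltn_ord j) (ltn_ord j') same).
split; last exact: (sum_ray_dir A_uniq A_neq0 q xi_vertex).
exact: (edge_vertex_ray A_uniq A_neq0 d_range sum_ms_pred xi_vertex mult_q unit).
Qed.
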